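(* Let $G$ be a good finite group and let $N$ be a normal subgroup of $G$ with $N\cong\mathbb Z_2$. If $G/N$ possesses a complete mapping, then $G$ possesses a complete mapping.
   Context: A finite group is called good if its Sylow-2 subgroup is trivial or noncyclic (and bad if its Sylow-2 subgroup is nontrivial and cyclic). A complete mapping of a group $G$ is a bijection $\phi:G\to G$ such that $g\mapsto g\phi(g)$ is also a bijection of $G$; equivalently, there are an index set $I$ and bijections $a,b,c:I\to G$ with $a(i)b(i)=c(i)$ for all $i\in I$. *)

From mathcomp Require Import all_boot all_fingroup all_solvable.
Set Implicit Arguments. Unset Strict Implicit. Unset Printing Implicit Defensive.
Local Open Scope group_scope.

Definition good (gT : finGroupType) (G : {group gT}) : Prop :=
  forall P : {group gT}, P \in 'Syl_2(G) -> P :=: 1 \/ ~~ cyclic P.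

Definition complete_mapping (gT : finGroupType) (G : {set gT}) (phi : gT -> gT) : Prop :=
  [/\ {in G, forall x, phi x \in G}, {in G &, injective phi},
      {in G, forall x, x * phi x \in G} & {in G &, injective (fun x => x * phi x)}].

Definition has_complete_mapping (gT : finGroupType) (G : {set gT}) : Prop :=
  exists phi : gT -> gT, complete_mapping G phi.

From mathcomp Require Import all_boot all_fingroup all_solvable.
Set Implicit Arguments. Unset Strict Implicit. Unset Printing Implicit Defensive.

(* Write N = {1, z}, let theta X = X * phi X, and pick an involution h of G / N
   with a lift H in G; G / N has even order because a Sylow 2-subgroup of a good
   group cannot have order 2.  Given a section s of G -> G / N and lifts c X of
   theta X, send s X to (s X)^-1 * c X and z * s X to z * (s (h X))^-1 * c (h X).
   This map Phi is injective, and so is g |-> g * Phi g on each of the families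
   s X and z * s X, whose products lie over theta X and h * theta (h X).  The two
   families can only collide when theta (h Y) = h * theta X; such collisions are
   avoided by choosing s and c along a 2-colouring of G / N that is flipped both
   by X |-> h X and by X |-> theta^-1 (h * theta X).  This colouring exists
   because the graph of two fixed-point-free involutions is a union of even
   cycles. *)

Section InvolutionBicolouring.

Variables (T : finType) (a b : T -> T).
Hypotheses (aK : involutive a) (bK : involutive b).
Hypotheses (a_fpf : forall x, a x != x) (b_fpf : forall x, b x != x).

Let r x := b (a x).

Let r_inj : injective r.
Proof. exact: inj_comp (can_inj bK) (can_inj aK). Qed.

Let iter_r_inj n : injective (iter n r).
Proof. by elim: n => // n IHn x y; rewrite !iterS => /r_inj/IHn. Qed.

Let iter_r_a x n : iter n r (a (iter n r x)) = a x.
Proof.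
have rar y : r (a (r y)) = a y by rewrite /r aK bK.
by elim: n => // n IHn; rewrite iterSr iterS rar.
Qed.

Let a_not_fconnect x : fconnect r x (a x) = false.
Proof.
(* If a x = r^m x, then a fixes r^k x when m = 2k, and b fixes a (r^k x) when
   m = 2k + 1. *)
apply/negP=> /iter_findex; move: (findex _ _ _) => m Em.
have Dm : m = m./2 + (m./2 + odd m) by rewrite addnA addnn addnC odd_double_half.
move: (m./2) (odd m) Dm => k [] Dm; have := iter_r_a x k;
  rewrite -[in RHS]Em Dm iterD ?addn1 ?addn0 => /iter_r_inj Ea.
- by case/eqP: (b_fpf (a (iter k r x))); rewrite {2}Ea iterS.
- by case/eqP: (a_fpf (iter k r x)).
Qed.

(* x and a x lie in distinct r-orbits, and b x lies in the r-orbit of a x. *)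
Let colour x := enum_rank (froot r x) < enum_rank (froot r (a x)).

Let colour_a x : colour (a x) = ~~ colour x.
Proof.
have root_a : (froot r (a x) == froot r x) = false.
  rewrite (root_connect (fconnect_sym r_inj)) (fconnect_sym r_inj).
  exact: a_not_fconnect.
rewrite /colour aK ltn_neqAle -leqNgt.
by rewrite (inj_eq (@ord_inj _)) (inj_eq enum_rank_inj) root_a.
Qed.

Let colour_b x : colour (b x) = ~~ colour x.
Proof.
have same_root y y' : fconnect r y y' -> froot r y = froot r y'.
  by move=> yy'; apply/eqP; rewrite (root_connect (fconnect_sym r_inj)).
rewrite -colour_a /colour aK (same_root (b x) (a x)) ?(same_root (a (b x)) x) //.
- by apply/connect1/eqP; rewrite /r aK bK.
- by rewrite (fconnect_sym r_inj); apply/connect1/eqP; rewrite /r aK.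
Qed.

Lemma involutions_bicolouring :
  exists c : T -> bool, (forall x, c (a x) = ~~ c x) /\ (forall x, c (b x) = ~~ c x).
Proof. by exists colour; split; [apply: colour_a | apply: colour_b]. Qed.

End InvolutionBicolouring.

Local Open Scope group_scope.

Section CompleteMappingBicolouring.

Variables (qT : finGroupType) (Q : {group qT}) (phi : qT -> qT) (h : qT).
Hypotheses (phi_cm : complete_mapping Q phi) (hh : h * h = 1) (h_neq1 : h != 1).

(* Extended by the identity outside Q to get a permutation that invF inverts. *)
Let theta X := if X \in Q then X * phi X else X.

Let theta_inj : injective theta.
Proof.
have [phiQ _ _ thetaI] := phi_cm.
move=> X Y; rewrite /theta; case: ifP => XQ; case: ifP => YQ // E.
- exact: thetaI.
- by rewrite -E groupM ?phiQ in YQ.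
- by rewrite E groupM ?phiQ in XQ.
Qed.

Let beta X := invF theta_inj (h * theta X).

Let hK : involutive (fun X => h * X).
Proof. by move=> X; rewrite mulgA hh mul1g. Qed.

Let mul_h_fpf X : h * X != X.
Proof. by rewrite -{2}[X]mul1g (inj_eq (mulIg X)). Qed.

Let betaK : involutive beta.
Proof. by move=> X; rewrite /beta f_invF hK invF_f. Qed.

Let beta_fpf X : beta X != X.
Proof.
apply: contra (mul_h_fpf (theta X)) => /eqP {2}<-.
by rewrite /beta f_invF.
Qed.

Lemma complete_mapping_bicolouring :
  exists K : qT -> bool, (forall X, K (h * X) = ~~ K X) /\
    {in Q &, forall X Y, Y * phi Y = h * (X * phi X) -> K Y = ~~ K X}.
Proof.
have [K [K_h K_beta]] := involutions_bicolouring hK betaK mul_h_fpf beta_fpf.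
exists K; split=> // X Y XQ YQ thetaY.
suff -> : Y = beta X by apply: K_beta.
by apply: theta_inj; rewrite /beta f_invF /theta XQ YQ.
Qed.

End CompleteMappingBicolouring.

Section OrderTwoNormalSubgroup.

Variables (gT : finGroupType) (G N : {group gT}) (z : gT).
Hypotheses (nsNG : N <| G) (z_neq1 : z != 1) (defN : N :=: [set 1; z]).

Local Notation Q := (G / N).
Local Notation pi := (coset N).

Let nGN : G \subset 'N(N) := normal_norm nsNG.

Let zN : z \in N. Proof. by rewrite defN set22. Qed.

Let zG : z \in G. Proof. exact: subsetP (normal_sub nsNG) z zN. Qed.

Let piM x y : x \in G -> y \in G -> pi (x * y) = pi x * pi y.
Proof. by move=> xG yG; rewrite morphM ?(subsetP nGN). Qed.

Let piV x : x \in G -> pi x^-1 = (pi x)^-1.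
Proof. by move=> xG; rewrite morphV ?(subsetP nGN). Qed.

Let pi_z : pi z = 1. Proof. exact: coset_id. Qed.

Lemma mulz_eqF x : (z * x == x) = false.
Proof. by rewrite -{2}[x]mul1g (inj_eq (mulIg x)) (negbTE z_neq1). Qed.

Lemma mulzz : z * z = 1.
Proof.
have /set2P[] // : z * z \in [set 1; z] by rewrite -defN groupM.
by move/eqP; rewrite mulz_eqF.
Qed.

Lemma commute_z g : g \in G -> commute z g.
Proof.
move=> gG; rewrite /commute conjgC; congr (_ * _).
have /set2P[/eqP|] // : z ^ g \in [set 1; z].
  by rewrite -defN memJ_norm ?(subsetP nGN).
by rewrite conjg_eq1 (negbTE z_neq1).
Qed.

Lemma eq_coset_mulz x y : x \in G -> y \in G -> pi x = pi y -> x = y \/ x = z * y.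
Proof.
move=> xG yG Exy; have : x * y^-1 \in [set 1; z].
  rewrite -defN; apply: coset_idr; first by rewrite (subsetP nGN) ?groupM ?groupV.
  by rewrite piM ?groupV // piV // Exy mulgV.
by case/set2P=> Dx; [left | right]; rewrite -(mulgKV y x) Dx ?mul1g.
Qed.

Lemma mem_repr_quotient (X : coset_of N) : X \in Q -> repr X \in G.
Proof.
move=> XQ; rewrite -(quotientGK nsNG).
by apply: mem_morphpre; [exact: repr_coset_norm | rewrite /= coset_reprK].
Qed.

Section LiftCompleteMapping.

Variables (phi : coset_of N -> coset_of N) (h : coset_of N) (s c : coset_of N -> gT).
Hypotheses (phi_cm : complete_mapping Q phi) (hQ : h \in Q).
Hypotheses (sG : {in Q, forall X, s X \in G}) (pi_s : {in Q, forall X, pi (s X) = X}).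
Hypotheses (cG : {in Q, forall X, c X \in G}).
Hypotheses (pi_c : {in Q, forall X, pi (c X) = X * phi X}).
Hypothesis c_cross : {in Q &, forall X Y, c X != s Y * (s (h * Y))^-1 * c (h * Y)}.

Definition lift_mapping g :=
  let X := pi g in
  if g == s X then (s X)^-1 * c X else z * ((s (h * X))^-1 * c (h * X)).

Let hXQ X : X \in Q -> h * X \in Q. Proof. exact: groupM. Qed.

Lemma section_cases g : g \in G -> g = s (pi g) \/ g = z * s (pi g).
Proof.
move=> gG; have XQ : pi g \in Q by apply: mem_quotient.
by apply: eq_coset_mulz; rewrite ?sG ?pi_s.
Qed.

Lemma lift_mapping_s X : X \in Q -> lift_mapping (s X) = (s X)^-1 * c X.
Proof. by move=> XQ; rewrite /lift_mapping pi_s ?eqxx. Qed.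

Lemma lift_mapping_zs X :
  X \in Q -> lift_mapping (z * s X) = z * ((s (h * X))^-1 * c (h * X)).
Proof.
by move=> XQ; rewrite /lift_mapping piM ?sG // pi_z mul1g pi_s // mulz_eqF.
Qed.

Lemma section_cases_inj (f : gT -> gT) (u v : coset_of N -> gT) :
    {in Q, forall X, f (s X) = u X} -> {in Q, forall X, f (z * s X) = v X} ->
    {in Q &, injective u} -> {in Q &, injective v} ->
    {in Q &, forall X Y, u X != v Y} ->
  {in G &, injective f}.
Proof.
move=> fs fzs uI vI uv g1 g2 g1G g2G.
have X1Q : pi g1 \in Q by apply: mem_quotient.
have X2Q : pi g2 \in Q by apply: mem_quotient.
case: (section_cases g1G) (section_cases g2G) => -> [] ->; rewrite ?fs ?fzs // => E.
- by rewrite (uI _ _ X1Q X2Q E).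
- by case/eqP: (uv _ _ X1Q X2Q).
- by case/eqP: (uv _ _ X2Q X1Q).
- by rewrite (vI _ _ X1Q X2Q E).
Qed.

Lemma lift_mapping_complete : complete_mapping G lift_mapping.
Proof.
have [phiQ phiI _ thetaI] := phi_cm.
have pG X : X \in Q -> (s X)^-1 * c X \in G.
  by move=> XQ; rewrite groupM ?groupV ?sG ?cG.
have pi_p X : X \in Q -> pi ((s X)^-1 * c X) = phi X.
  by move=> XQ; rewrite piM ?groupV ?sG ?cG // piV ?sG // pi_s // pi_c // mulKg.
have pi_q X : X \in Q ->
    pi (s X * (s (h * X))^-1 * c (h * X)) = h^-1 * ((h * X) * phi (h * X)).
  move=> XQ; rewrite -mulgA piM ?sG ?pG ?hXQ // pi_p ?hXQ // pi_s //.
  by rewrite mulgA mulKg.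
have mul_zs X : X \in Q ->
    z * s X * lift_mapping (z * s X) = s X * (s (h * X))^-1 * c (h * X).
  move=> XQ; rewrite lift_mapping_zs // (commute_z (sG XQ)) -mulgA.
  by rewrite [z * (z * _)]mulgA mulzz mul1g mulgA.
have liftG : {in G, forall g, lift_mapping g \in G}.
  move=> g gG; have XQ := mem_quotient N gG.
  case: (section_cases gG) => ->; rewrite ?lift_mapping_s ?lift_mapping_zs ?pG //.
  by rewrite groupM ?pG ?hXQ.
split=> //.
- apply: (section_cases_inj lift_mapping_s lift_mapping_zs).
  + by move=> X Y XQ YQ /(congr1 pi); rewrite !pi_p //; apply: phiI.
  + move=> X Y XQ YQ /mulgI/(congr1 pi); rewrite !pi_p ?hXQ //.
    by move/(phiI _ _ (hXQ XQ) (hXQ YQ))/mulgI.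
  + move=> X Y XQ YQ; apply/eqP=> E.
    have EX : X = h * Y.
      apply: phiI; rewrite ?hXQ //; move/(congr1 pi): E.
      by rewrite pi_p // piM ?zG ?pG ?hXQ // pi_z mul1g pi_p ?hXQ.
    by move: E; rewrite -EX => /esym/eqP; rewrite mulz_eqF.
- by move=> g gG; rewrite groupM ?liftG.
- apply: (section_cases_inj (u := c) _ mul_zs).
  + by move=> X XQ; rewrite lift_mapping_s // mulKVg.
  + by move=> X Y XQ YQ /(congr1 pi); rewrite !pi_c //; apply: thetaI.
  + move=> X Y XQ YQ /(congr1 pi); rewrite !pi_q // => /mulgI.
    by move/(thetaI _ _ (hXQ XQ) (hXQ YQ))/mulgI.
  + exact: c_cross.
Qed.

End LiftCompleteMapping.

Section TwistedLift.

Variables (phi : coset_of N -> coset_of N) (h : coset_of N) (H : gT).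
Variable K : coset_of N -> bool.
Hypotheses (phiQ : {in Q, forall X, phi X \in Q}) (hQ : h \in Q) (hh : h * h = 1).
Hypotheses (HG : H \in G) (pi_H : pi H = h).
Hypothesis K_h : forall X, K (h * X) = ~~ K X.
Hypothesis K_theta : {in Q &, forall X Y, Y * phi Y = h * (X * phi X) -> K Y = ~~ K X}.

Let hK X : h * (h * X) = X. Proof. by rewrite mulgA hh mul1g. Qed.

Let hXQ X : X \in Q -> h * X \in Q. Proof. exact: groupM. Qed.

Let pi_Hpm (b : bool) : pi (if b then H^-1 else H) = h.
Proof. by case: b; rewrite ?piV // pi_H; apply/eqP; rewrite eq_invg_mul hh. Qed.

Definition twisted_section X := if K X then repr X else H * repr (h * X).

Definition twisted_lift X :=
  let W := X * phi X in if K X then repr W else z * H * repr (h * W).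

Lemma twisted_section_G : {in Q, forall X, twisted_section X \in G}.
Proof.
move=> X XQ; rewrite /twisted_section.
by case: (K X); rewrite ?groupM ?mem_repr_quotient ?hXQ.
Qed.

Lemma pi_twisted_section : {in Q, forall X, pi (twisted_section X) = X}.
Proof.
move=> X XQ; rewrite /twisted_section; case: (K X); rewrite ?coset_reprK //.
by rewrite piM ?mem_repr_quotient ?hXQ // pi_H coset_reprK hK.
Qed.

Lemma twisted_lift_G : {in Q, forall X, twisted_lift X \in G}.
Proof.
move=> X XQ; have WQ : X * phi X \in Q by rewrite groupM ?phiQ.
by rewrite /twisted_lift; case: (K X); rewrite ?groupM ?mem_repr_quotient ?hXQ.
Qed.

Lemma pi_twisted_lift : {in Q, forall X, pi (twisted_lift X) = X * phi X}.
Proof.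
move=> X XQ; have WQ : X * phi X \in Q by rewrite groupM ?phiQ.
rewrite /twisted_lift; case: (K X); rewrite ?coset_reprK //.
by rewrite !piM ?groupM ?mem_repr_quotient ?hXQ // pi_z pi_H coset_reprK mul1g hK.
Qed.

Lemma twisted_section_ratio X :
  twisted_section X * (twisted_section (h * X))^-1 = if K X then H^-1 else H.
Proof.
by rewrite /twisted_section K_h hK; case: (K X); rewrite /= ?invMg ?mulKVg ?mulgK.
Qed.

Lemma twisted_lift_cross : {in Q &, forall X Y, twisted_lift X !=
  twisted_section Y * (twisted_section (h * Y))^-1 * twisted_lift (h * Y)}.
Proof.
move=> X Y XQ YQ; rewrite twisted_section_ratio; apply/eqP=> E.
have hYQ := hXQ YQ.
have theta_hY : (h * Y) * phi (h * Y) = h * (X * phi X).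
  have HpmG : (if K Y then H^-1 else H) \in G by case: (K Y); rewrite ?groupV.
  move/(congr1 pi): (E); rewrite piM ?twisted_lift_G // pi_Hpm !pi_twisted_lift //.
  by move=> ->; rewrite hK.
have := K_theta XQ hYQ theta_hY; rewrite K_h => /negb_inj KY.
move: E; rewrite /twisted_lift theta_hY hK K_h KY.
case: (K X) => /= [|/mulIg/eqP]; last by rewrite mulz_eqF.
by rewrite (commute_z HG) -mulgA mulKg => /esym/eqP; rewrite mulz_eqF.
Qed.

End TwistedLift.

End OrderTwoNormalSubgroup.

Lemma card2_group_eq (gT : finGroupType) (N : {group gT}) :
  #|N| = 2 -> exists2 z, z != 1 & N :=: [set 1; z].
Proof.
move=> N2; have : #|N :\ 1| == 1%N by move: N2; rewrite (cardsD1 1) group1 add1n => -[->].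
case/cards1P=> z Dz; exists z; first by have /setD1P[] : z \in N :\ 1 by rewrite Dz set11.
by rewrite -(setD1K (group1 N)) Dz.
Qed.

Lemma good_even_dvd4 (gT : finGroupType) (G : {group gT}) :
  good G -> 2 %| #|G| -> 4 %| #|G|.
Proof.
move=> goodG; have G_gt0 := cardG_gt0 G.
rewrite -[4]/(2 ^ 2)%N -[in X in X -> _](expn1 2) !pfactor_dvdn // => logG_gt0.
rewrite ltn_neqAle logG_gt0 andbT; apply/eqP=> logG.
have [P sylP] := Sylow_exists 2 G.
have P2 : #|P| = 2 by rewrite (card_Hall sylP) p_part -logG.
case: (goodG P); first by rewrite inE.
- by move=> P1; rewrite P1 cards1 in P2.
- by rewrite prime_cyclic ?P2.
Qed.

Lemma good_quotient_even (gT : finGroupType) (G N : {group gT}) :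
  good G -> N <| G -> #|N| = 2 -> 2 %| #|G / N|.
Proof.
move=> goodG nsNG N2; rewrite -(@dvdn_pmul2l 2) // -N2 card_quotient ?normal_norm //.
by rewrite Lagrange ?normal_sub // N2 good_even_dvd4 // -N2 cardSg ?normal_sub.
Qed.

Unset Implicit Arguments.

Theorem proposition2p4 (gT : finGroupType) (G N : {group gT}) :
  good G -> N <| G -> #|N| = 2 ->
  has_complete_mapping (G / N)%g -> has_complete_mapping G.
Proof.
move=> goodG nsNG N2 [phi phi_cm]; have [phiQ _ _ _] := phi_cm.
have [z z_neq1 defN] := card2_group_eq N2.
have [h hQ h2] := Cauchy (isT : prime 2) (good_quotient_even goodG nsNG N2).
have hh : h * h = 1 by rewrite -expg2 -h2 expg_order.
have h_neq1 : h != 1 by rewrite -order_eq1 h2.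
have /morphimP[H _ HG /esym pi_H] := hQ.
have [K [K_h K_theta]] := complete_mapping_bicolouring phi_cm hh h_neq1.
exists (lift_mapping z h (twisted_section h H K) (twisted_lift z phi h H K)).
apply: (lift_mapping_complete nsNG z_neq1 defN phi_cm hQ).
- exact: (twisted_section_G nsNG K hQ HG).
- exact: (pi_twisted_section nsNG K hQ hh HG pi_H).
- exact: (twisted_lift_G nsNG defN K phiQ hQ HG).
- exact: (pi_twisted_lift nsNG defN K phiQ hQ hh HG pi_H).
- exact: (twisted_lift_cross nsNG z_neq1 defN phiQ hQ hh HG pi_H K_h K_theta).
Qed.
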